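(* Let $m\le t/100$. For any communication protocol $\Pi$ for the $m$-party $\textsf{MostlyEq}$ problem with failure probability $\Pr[\Pi(\boldsymbol P_U)=1]+\Pr[\Pi(\boldsymbol P_{Eq})=0]<0.1$, we have $\mathrm I\big(\Pi(\boldsymbol P_U);\boldsymbol P_U\big)=\Omega(1)$, i.e. the mutual information between the transcript and the input, when the input is drawn from $\boldsymbol P_U$, is at least an absolute constant.
   Context: In the $m$-party $\textsf{MostlyEq}$ problem, party $i$ holds $z_i\in[t]$, and $(z_1,\dots,z_m)$ is drawn from one of: $\boldsymbol P_U$, where the $z_i$ are i.i.d. uniform on $[t]$; or $\boldsymbol P_{Eq}$, where $\alpha$ is uniform in $[t]$ and independently each $z_i=\alpha$ with probability $1/2$ and otherwise is uniform on $[t]$. The parties communicate (possibly with private randomness) and the protocol outputs $1$ to indicate $\boldsymbol P_{Eq}$ and $0$ to indicate $\boldsymbol P_U$; $\Pi(\cdot)$ denotes the transcript on an input from the given distribution. *)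

From mathcomp Require Import all_boot all_order all_algebra.
From mathcomp Require Import reals exp.
Set Implicit Arguments. Unset Strict Implicit. Unset Printing Implicit Defensive.
Import Order.TTheory GRing.Theory Num.Theory.
Local Open Scope ring_scope.

Definition input (m t : nat) := {ffun 'I_m -> 'I_t}.

(* A randomized blackboard protocol tree.  At an internal node, party
   [i] writes one bit on the blackboard; with its private randomness it
   writes [true] with probability [p (z i)], depending only on its own
   input (and on the history = position in the tree).  Leaves carry the
   output bit (1 = "P_Eq", 0 = "P_U"). *)
Inductive protocol (R : Type) (m t : nat) : Type :=
| Leaf of bool
| Node of 'I_m & ('I_t -> R) & protocol R m t & protocol R m t.
Arguments Leaf {R m t}.
Arguments Node {R m t}.

Section Proto.
Variables (R : realType) (m t : nat).

Fixpoint valid (P : protocol R m t) : Prop :=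
  match P with
  | Leaf _ => True
  | Node _ p c0 c1 => (forall a, 0 <= p a <= 1) /\ valid c0 /\ valid c1
  end.

Fixpoint transcripts (P : protocol R m t) : seq (seq bool) :=
  match P with
  | Leaf _ => [:: [::]]
  | Node _ _ c0 c1 =>
      map (cons false) (transcripts c0) ++ map (cons true) (transcripts c1)
  end.

Fixpoint trprob (P : protocol R m t) (z : input m t) (tau : seq bool) : R :=
  match P, tau with
  | Leaf _, [::] => 1
  | Leaf _, _ :: _ => 0
  | Node _ _ _ _, [::] => 0
  | Node i p c0 c1, false :: tau' => (1 - p (z i)) * trprob c0 z tau'
  | Node i p c0 c1, true :: tau' => p (z i) * trprob c1 z tau'
  end.

Fixpoint accprob (P : protocol R m t) (z : input m t) : R :=
  match P with
  | Leaf b => (b : nat)%:R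
  | Node i p c0 c1 => p (z i) * accprob c1 z + (1 - p (z i)) * accprob c0 z
  end.

Definition PU (z : input m t) : R := (t%:R ^+ m)^-1.

(* P_Eq: alpha uniform; each z_i = alpha w.p. 1/2, else uniform. *)
Definition PEq (z : input m t) : R :=
  t%:R^-1 * \sum_(a : 'I_t)
     \prod_(i : 'I_m) ((z i == a)%:R / 2 + (2 * t%:R)^-1).

Definition failure (P : protocol R m t) : R :=
  \sum_(z : input m t) PU z * accprob P z
  + \sum_(z : input m t) PEq z * (1 - accprob P z).

Definition trmarg (P : protocol R m t) (tau : seq bool) : R :=
  \sum_(z : input m t) PU z * trprob P z tau.

(* I(Pi(P_U); P_U) in nats, with the convention 0 log 0 = 0. *)
Definition mutual_info (P : protocol R m t) : R :=
  \sum_(tau <- transcripts P) \sum_(z : input m t)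
     PU z * trprob P z tau * ln (trprob P z tau / trmarg P tau).

End Proto.

From mathcomp Require Import all_boot all_order all_algebra.
From mathcomp Require Import reals exp.
From mathcomp Require Import ring lra.
Import Order.TTheory GRing.Theory Num.Theory.
Local Open Scope ring_scope.

Set Implicit Arguments.
Unset Strict Implicit.
Unset Printing Implicit Defensive.

(* Every transcript tau of a private-coin protocol is a rectangle:
   Pr[Pi(z) = tau] = k * prod_i q_i(z_i).  Write it as M * F(z), where
   M = Pr[Pi(P_U) = tau] and F = prod_i rho_i is a product of densities of mean
   one under the uniform law.  Then
     E_{P_Eq}[F] = t^-1 sum_alpha prod_i (1 + rho_i(alpha)) / 2 >= 1 - E_U[F ln F],
   by prod_i y_i >= 1 + sum_i ln y_i, the pointwise bound
   ln ((1 + x) / 2) >= 3/2 (x - 1) - x ln x, and additivity of entropy over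
   products.  Hence Pr[Pi(P_Eq) = tau] >= Pr[Pi(P_U) = tau] - I_tau, where
   I_tau >= 0 is the contribution of tau to I(Pi(P_U); P_U).  Weighting by the
   output bit of tau and summing gives failure >= 1 - I, so failure < 1/10
   forces I > 9/10. *)

Section RealInequalities.
Variable R : realType.
Implicit Types x y : R.

Lemma ln_ge1BV y : 0 < y -> 1 - y^-1 <= ln y.
Proof.
move=> y_gt0; have := @le_ln1Dx R (y^-1 - 1).
rewrite ltrBrDr addrC subrr invr_gt0 addrC subrK lnV ?posrE // => /(_ y_gt0).
lra.
Qed.

Lemma xlnx_ge_sqrt x : 0 <= x -> 2 * (x - Num.sqrt x) <= x * ln x.
Proof.
move=> x_ge0; have [->|x_neq0] := eqVneq x 0.
  by rewrite sqrtr0 subrr !mulr0 mul0r.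
have s_gt0 : 0 < Num.sqrt x by rewrite sqrtr_gt0 lt_def x_neq0.
set s := Num.sqrt x in s_gt0 *; have x_eq : x = s ^+ 2 by rewrite sqr_sqrtr.
rewrite x_eq lnXn //.
have : s ^+ 2 * (1 - s^-1) <= s ^+ 2 * ln s by rewrite ler_wpM2l ?sqr_ge0 ?ln_ge1BV.
have -> : s ^+ 2 * (1 - s^-1) = s ^+ 2 - s by field; rewrite gt_eqF.
rewrite mulrnAr; lra.
Qed.

Lemma ln_half1D_ge x : 0 <= x -> 3 / 2 * (x - 1) - x * ln x <= ln ((1 + x) / 2).
Proof.
move=> x_ge0; have xlnx := xlnx_ge_sqrt x_ge0.
have := @ln_ge1BV ((1 + x) / 2) ltac:(apply: divr_gt0; lra).
have -> : 1 - ((1 + x) / 2)^-1 = (x - 1) / (x + 1) by rewrite invf_div; field; lra.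
suff : 3 / 2 * (x - 1) - 2 * (x - Num.sqrt x) <= (x - 1) / (x + 1) by lra.
set s := Num.sqrt x; have -> : x = s ^+ 2 by rewrite sqr_sqrtr.
have s2D1_gt0 : 0 < s ^+ 2 + 1 by rewrite ltr_pwDr ?sqr_ge0.
rewrite ler_pdivlMr // -subr_ge0.
have -> : (s ^+ 2 - 1) - (3 / 2 * (s ^+ 2 - 1) - 2 * (s ^+ 2 - s)) * (s ^+ 2 + 1)
  = ((s - 1) ^+ 2) ^+ 2 / 2 by field.
by rewrite divr_ge0 ?sqr_ge0.
Qed.

Lemma ln_prod (I : finType) (y : I -> R) : (forall i, 0 < y i) ->
  ln (\prod_i y i) = \sum_i ln (y i).
Proof.
move=> y_gt0; rewrite -[RHS]expRK expR_sum; congr ln.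
by apply: eq_bigr => i _; rewrite lnK ?posrE.
Qed.

Lemma prod_ge1D_sum_ln (I : finType) (y : I -> R) : (forall i, 0 < y i) ->
  1 + \sum_i ln (y i) <= \prod_i y i.
Proof.
move=> y_gt0; rewrite -ln_prod //.
by rewrite -[X in _ <= X]lnK ?expR_ge1Dx // posrE prodr_gt0.
Qed.

Lemma prod_mul_ln_prod (I : finType) (y : I -> R) : (forall i, 0 <= y i) ->
  (\prod_i y i) * ln (\prod_i y i) = \sum_i (\prod_j y j) * ln (y i).
Proof.
move=> y_ge0; have [i /eqP yi0|y_neq0] := pickP (fun i => y i == 0).
  by rewrite (bigD1 i) //= yi0 !mul0r big1 // => j _; rewrite mul0r.
rewrite -big_distrr ln_prod // => i.
by rewrite lt_def y_ge0 andbT y_neq0.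
Qed.

Lemma xlnx_div_ge x y : 0 <= x -> 0 < y -> x - y <= x * ln (x / y).
Proof.
move=> x_ge0 y_gt0; have [->|x_neq0] := eqVneq x 0; first by rewrite mul0r; lra.
have x_gt0 : 0 < x by rewrite lt_def x_neq0.
have := ln_ge1BV (divr_gt0 x_gt0 y_gt0); rewrite invf_div => h.
have := ler_wpM2l (ltW x_gt0) h.
by rewrite mulrBr mulr1 mulrCA divff ?mulr1 // gt_eqF.
Qed.

(* Since [ln] is 0 on nonpositive arguments, the case [\sum_j w j * f j = 0] is trivial. *)
Lemma relative_entropy_ge0 (I : finType) (w f : I -> R) :
  (forall i, 0 <= w i) -> (forall i, 0 <= f i) -> \sum_i w i = 1 ->
  0 <= \sum_i w i * f i * ln (f i / \sum_j w j * f j).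
Proof.
move=> w_ge0 f_ge0 w_sum1; set M := \sum_j w j * f j.
have [M_le0|M_gt0] := lerP M 0.
  rewrite big1 // => i _; rewrite ln0 ?mulr0 //.
  by rewrite mulr_ge0_le0 ?invr_le0.
apply: (@le_trans _ _ (\sum_i w i * (f i - M))).
  rewrite (eq_bigr (fun i => w i * f i - w i * M)) => [|i _]; last by rewrite mulrBr.
  by rewrite sumrB -big_distrl /= w_sum1 mul1r subrr.
apply: ler_sum => i _; rewrite -mulrA ler_wpM2l //.
exact: xlnx_div_ge.
Qed.

End RealInequalities.

Lemma prod_mul_if_eq (R : comPzSemiRingType) (I : finType) (i : I) (G F : I -> R) :
  \prod_j ((if j == i then G j else 1) * F j) = G i * \prod_j F j.
Proof. by rewrite big_split /= (bigD1 i) //= eqxx big1 ?mulr1 // => j /negbTE ->. Qed.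

Section ProductDensities.
Variables (R : realType) (m t : nat).
Hypothesis t_gt0 : (0 < t)%N.

Let t_neq0 : t%:R != 0 :> R.
Proof. by rewrite pnatr_eq0 -lt0n. Qed.

Definition PEq_given (al a : 'I_t) : R := (a == al)%:R / 2 + (2 * t%:R)^-1.

Lemma PEq_given_ge0 al a : 0 <= PEq_given al a.
Proof. by rewrite addr_ge0 ?divr_ge0 ?invr_ge0 ?mulr_ge0. Qed.

Lemma PEq_ge0 (z : input m t) : 0 <= PEq R z.
Proof.
rewrite mulr_ge0 ?invr_ge0 ?sumr_ge0 // => al _.
by rewrite prodr_ge0 // => i _; apply: PEq_given_ge0.
Qed.

Lemma sum_PU_prod (f : 'I_m -> 'I_t -> R) :
  \sum_(z : input m t) PU R z * \prod_i f i (z i) = \prod_i (t%:R^-1 * \sum_a f i a).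
Proof.
have PU_prod (z : input m t) : PU R z = \prod_(i : 'I_m) t%:R^-1.
  by rewrite /PU prodr_const card_ord exprVn.
rewrite (eq_bigr (fun z : input m t => \prod_i (t%:R^-1 * f i (z i)))) => [|z _].
  by under [RHS]eq_bigr do rewrite big_distrr; rewrite bigA_distr_bigA.
by rewrite PU_prod -big_split.
Qed.

Lemma sum_PU : \sum_(z : input m t) PU R z = 1.
Proof.
transitivity (\sum_(z : input m t) PU R z * \prod_(i : 'I_m) 1).
  by apply: eq_bigr => z _; rewrite big1 ?mulr1.
by rewrite (sum_PU_prod (fun _ _ => 1)) big1 // => i _; rewrite sumr_const card_ord mulVf.
Qed.

Lemma sum_PEq_prod (f : 'I_m -> 'I_t -> R) :
  \sum_(z : input m t) PEq R z * \prod_i f i (z i)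
  = t%:R^-1 * \sum_(al : 'I_t) \prod_i \sum_a PEq_given al a * f i a.
Proof.
under eq_bigr do rewrite -mulrA big_distrl /=.
rewrite -big_distrr exchange_big /=; congr (_ * _); apply: eq_bigr => al _.
under eq_bigr do rewrite -big_split.
by rewrite bigA_distr_bigA.
Qed.

Lemma sum_PEq_given (r : 'I_t -> R) al :
  \sum_a r a = t%:R -> \sum_a PEq_given al a * r a = (1 + r al) / 2.
Proof.
move=> r_sum; under eq_bigr do rewrite mulrDl.
rewrite big_split /= -big_distrr /= r_sum (bigD1 al) //= eqxx big1 => [|a /negbTE ->].
  by rewrite /= addr0; field.
by rewrite !mul0r.
Qed.

Section Density.
Variable rho : 'I_m -> 'I_t -> R.
Hypothesis rho_ge0 : forall i a, 0 <= rho i a.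
Hypothesis rho_mean : forall i, \sum_a rho i a = t%:R.

Lemma PU_entropy_prod :
  \sum_(z : input m t) PU R z * ((\prod_i rho i (z i)) * ln (\prod_i rho i (z i)))
  = \sum_i t%:R^-1 * \sum_a rho i a * ln (rho i a).
Proof.
under eq_bigr do rewrite prod_mul_ln_prod // big_distrr.
rewrite exchange_big; apply: eq_bigr => i _ /=.
pose G j a := rho j a * (if j == i then ln (rho j a) else 1).
transitivity (\sum_(z : input m t) PU R z * \prod_j G j (z j)).
  apply: eq_bigr => z _; rewrite /G big_split /=; congr (_ * (_ * _)).
  by rewrite (bigD1 i) //= eqxx big1 ?mulr1 // => j /negbTE ->.
rewrite sum_PU_prod (bigD1 i) //= [X in _ * X]big1 => [|j /negbTE ji].
  by rewrite mulr1 /G; under eq_bigr do rewrite eqxx.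
by rewrite /G; under eq_bigr do rewrite ji mulr1; rewrite rho_mean mulVf.
Qed.

Lemma PEq_prod_density :
  \sum_(z : input m t) PEq R z * \prod_i rho i (z i)
  = t%:R^-1 * \sum_(al : 'I_t) \prod_i ((1 + rho i al) / 2).
Proof.
rewrite sum_PEq_prod; congr (_ * _); apply: eq_bigr => al _.
by apply: eq_bigr => i _; apply: sum_PEq_given.
Qed.

Lemma PEq_prod_density_ge :
  1 - \sum_(z : input m t) PU R z * ((\prod_i rho i (z i)) * ln (\prod_i rho i (z i)))
  <= \sum_(z : input m t) PEq R z * \prod_i rho i (z i).
Proof.
rewrite PU_entropy_prod PEq_prod_density.
apply: (@le_trans _ _ (t%:R^-1 * \sum_(al : 'I_t) (1 + \sum_i ln ((1 + rho i al) / 2)))).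
  rewrite big_split sumr_const card_ord /= mulrDr mulVf // exchange_big big_distrr /=.
  rewrite -sumrN lerD2l; apply: ler_sum => i _; rewrite -mulrN ler_wpM2l ?invr_ge0 //.
  have <- : \sum_al (3 / 2 * (rho i al - 1) - rho i al * ln (rho i al))
      = - \sum_a rho i a * ln (rho i a).
    by rewrite sumrB -big_distrr sumrB rho_mean sumr_const card_ord subrr /= mulr0 sub0r.
  by apply: ler_sum => al _; apply: ln_half1D_ge.
rewrite ler_wpM2l ?invr_ge0 // ler_sum // => al _.
by apply: prod_ge1D_sum_ln => i; rewrite divr_gt0 // ltr_pwDl.
Qed.

End Density.

Definition rectangle (g : input m t -> R) :=
  exists k (q : 'I_m -> 'I_t -> R),
    [/\ 0 <= k, forall i a, 0 <= q i a & forall z, g z = k * \prod_i q i (z i)].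

Lemma rectangle_const k : 0 <= k -> rectangle (fun _ => k).
Proof. by exists k, (fun _ _ => 1); split => // z; rewrite big1 ?mulr1. Qed.

Lemma rectangle_scale i (f : 'I_t -> R) (g : input m t -> R) :
  (forall a, 0 <= f a) -> rectangle g -> rectangle (fun z => f (z i) * g z).
Proof.
move=> f_ge0 [k [q [k_ge0 q_ge0 g_eq]]].
exists k, (fun j a => (if j == i then f a else 1) * q j a); split => //.
  by move=> j a; rewrite mulr_ge0 //; case: eqP.
by move=> z; rewrite g_eq prod_mul_if_eq mulrCA.
Qed.

Lemma PEq_rectangle_ge (g : input m t -> R) : rectangle g ->
  \sum_(z : input m t) PU R z * g z
  - \sum_(z : input m t) PU R z * g z * ln (g z / \sum_(z' : input m t) PU R z' * g z')
  <= \sum_(z : input m t) PEq R z * g z.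
Proof.
move=> [k [q [k_ge0 q_ge0 g_eq]]]; set M := \sum_(z' : input m t) PU R z' * g z'.
have g_ge0 z : 0 <= g z by rewrite g_eq mulr_ge0 ?prodr_ge0.
have [M_le0|M_gt0] := lerP M 0.
  rewrite big1 ?subr0 => [|z _]; last by rewrite ln0 ?mulr0 // mulr_ge0_le0 ?invr_le0.
  apply: le_trans M_le0 _; rewrite sumr_ge0 // => z _.
  by rewrite mulr_ge0 ?PEq_ge0.
pose A i := t%:R^-1 * \sum_a q i a.
have M_eq : M = k * \prod_i A i.
  rewrite /M (eq_bigr (fun z : input m t => k * (PU R z * \prod_i q i (z i)))).
    by rewrite -big_distrr sum_PU_prod.
  by move=> z _; rewrite g_eq mulrCA.
have A_gt0 i : 0 < A i.
  rewrite lt_def mulr_ge0 ?invr_ge0 ?sumr_ge0 // andbT.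
  by apply: contraTneq M_gt0 => Ai0; rewrite M_eq (bigD1 i) //= Ai0 mul0r mulr0 ltxx.
pose rho i a := q i a / A i.
have rho_ge0 i a : 0 <= rho i a by rewrite divr_ge0 // ltW.
have rho_mean i : \sum_a rho i a = t%:R.
  have q_sum_neq0 : \sum_a q i a != 0.
    by move: (A_gt0 i); rewrite /A; apply: contraTneq => ->; rewrite mulr0 ltxx.
  by rewrite -big_distrl /= /A; field; rewrite q_sum_neq0 t_neq0.
have g_eqM z : g z = M * \prod_i rho i (z i).
  rewrite g_eq M_eq -mulrA -big_split; congr (_ * _); apply: eq_bigr => i _.
  by rewrite /rho /= mulrC divfK // gt_eqF.
have -> : \sum_(z : input m t) PU R z * g z * ln (g z / M)
    = M * \sum_(z : input m t) PU R z * ((\prod_i rho i (z i)) * ln (\prod_i rho i (z i))).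
  rewrite big_distrr /=; apply: eq_bigr => z _.
  by rewrite g_eqM [M * _]mulrC mulfK ?gt_eqF //; ring.
have -> : \sum_(z : input m t) PEq R z * g z
    = M * \sum_(z : input m t) PEq R z * \prod_i rho i (z i).
  by rewrite big_distrr; apply: eq_bigr => z _; rewrite g_eqM mulrCA.
have := PEq_prod_density_ge rho_ge0 rho_mean.
by move/(ler_wpM2l (ltW M_gt0)); rewrite mulrBr mulr1.
Qed.

End ProductDensities.

Section Transcripts.
Variables (R : realType) (m t : nat).
Implicit Types (P : protocol R m t) (z : input m t) (tau : seq bool).

Fixpoint output_at P tau : R :=
  match P, tau with
  | Leaf o, _ => (o : nat)%:R
  | Node _ _ _ _, [::] => 0
  | Node _ _ c0 c1, b :: tau' => output_at (if b then c1 else c0) tau'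
  end.

Lemma output_at01 P tau : 0 <= output_at P tau <= 1.
Proof.
elim: P tau => [[]|i p c0 IH0 c1 IH1] [|[] tau] //=; by rewrite ?lexx ?ler01.
Qed.

Lemma trprob_ge0 P z tau : valid P -> 0 <= trprob P z tau.
Proof.
elim: P tau => [o|i p c0 IH0 c1 IH1] [|[] tau] //= [p01 [v0 v1]].
  by rewrite mulr_ge0 ?IH1 //; case/andP: (p01 (z i)).
by rewrite mulr_ge0 ?IH0 // subr_ge0; case/andP: (p01 (z i)).
Qed.

Lemma sum_trprob P z : \sum_(tau <- transcripts P) trprob P z tau = 1.
Proof.
elim: P => [o|i p c0 IH0 c1 IH1] /=; first by rewrite big_seq1.
rewrite big_cat !big_map /= -!big_distrr /= IH0 IH1; ring.
Qed.

Lemma accprob_transcripts P z :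
  accprob P z = \sum_(tau <- transcripts P) trprob P z tau * output_at P tau.
Proof.
elim: P => [o|i p c0 IH0 c1 IH1] /=; first by rewrite big_seq1 mul1r.
rewrite big_cat !big_map /= addrC IH0 IH1 !big_distrr /=.
by congr (_ + _); apply: eq_bigr => tau _; rewrite mulrA.
Qed.

Lemma trprob_rectangle P tau : valid P -> rectangle (fun z => trprob P z tau).
Proof.
elim: P tau => [o|i p c0 IH0 c1 IH1] [|[] tau] /=; try by move=> _; apply: rectangle_const.
  move=> [p01 [_ v1]]; apply: (rectangle_scale i _ (IH1 _ v1)) => a.
  by case/andP: (p01 a).
move=> [p01 [v0 _]]; apply: (rectangle_scale i (f := fun a => 1 - p a) _ (IH0 _ v0)) => a.
by rewrite subr_ge0; case/andP: (p01 a).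
Qed.

Section Failure.
Hypothesis t_gt0 : (0 < t)%N.

Definition trmargEq P tau := \sum_(z : input m t) PEq R z * trprob P z tau.

Definition trinfo P tau := \sum_(z : input m t)
  PU R z * trprob P z tau * ln (trprob P z tau / trmarg P tau).

Lemma trinfo_ge0 P tau : valid P -> 0 <= trinfo P tau.
Proof.
move=> vP; apply: relative_entropy_ge0 => [z|z|]; last exact: sum_PU.
  by rewrite invr_ge0 exprn_ge0.
exact: trprob_ge0.
Qed.

Lemma trmargEq_ge P tau : valid P -> trmarg P tau - trinfo P tau <= trmargEq P tau.
Proof. by move=> vP; apply: PEq_rectangle_ge => //; apply: trprob_rectangle. Qed.

Lemma sum_trmarg P : \sum_(tau <- transcripts P) trmarg P tau = 1.
Proof.
rewrite exchange_big /= -[RHS](@sum_PU R m t t_gt0); apply: eq_bigr => z _.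
by rewrite -big_distrr /= sum_trprob mulr1.
Qed.

Lemma failure_transcripts P : failure P = \sum_(tau <- transcripts P)
  (output_at P tau * trmarg P tau + (1 - output_at P tau) * trmargEq P tau).
Proof.
rewrite /failure big_split /=; congr (_ + _).
  transitivity (\sum_(z : input m t) \sum_(tau <- transcripts P)
                  PU R z * (trprob P z tau * output_at P tau)).
    by apply: eq_bigr => z _; rewrite accprob_transcripts big_distrr.
  rewrite exchange_big; apply: eq_bigr => tau _ /=.
  by rewrite /trmarg big_distrr; apply: eq_bigr => z _ /=; ring.
transitivity (\sum_(z : input m t) \sum_(tau <- transcripts P)
                PEq R z * (trprob P z tau * (1 - output_at P tau))).
  apply: eq_bigr => z _; rewrite -big_distrr accprob_transcripts.
  rewrite -[X in X - _](sum_trprob P z) -sumrB; congr (_ * _).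
  by apply: eq_bigr => tau _; ring.
rewrite exchange_big; apply: eq_bigr => tau _ /=.
by rewrite /trmargEq big_distrr; apply: eq_bigr => z _ /=; ring.
Qed.

Lemma failure_ge P : valid P -> 1 - mutual_info P <= failure P.
Proof.
move=> vP; change (mutual_info P) with (\sum_(tau <- transcripts P) trinfo P tau).
rewrite failure_transcripts -[X in X - _](sum_trmarg P) -sumrB.
apply: ler_sum => tau _; have /andP[o_ge0 o_le1] := output_at01 P tau.
have EMI := trmargEq_ge tau vP; have I_ge0 := trinfo_ge0 tau vP.
rewrite -subr_ge0 in EMI; rewrite -subr_ge0 in o_le1.
have := mulr_ge0 o_ge0 I_ge0; have := mulr_ge0 o_le1 EMI; nra.
Qed.

End Failure.

End Transcripts.

Theorem lemma5p2 (R : realType) :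
  exists c : R, 0 < c /\
    forall (t m : nat), (0 < t)%N -> (100 * m <= t)%N ->
    forall P : protocol R m t, valid P ->
      failure P < 1 / 10 ->
      c <= mutual_info P.
Proof.
exists (1 / 2); split => [|t m t_gt0 _ P vP failure_lt]; first by rewrite divr_gt0.
have := failure_ge t_gt0 vP; lra.
Qed.
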